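(* Assume $\kappa=\kappa^{<\kappa}$. For every point $x$ of $S_\kappa$, the subspace $S_\kappa\setminus\{x\}$ is not $C^*$-embedded in $S_\kappa$, i.e. there is a bounded continuous real-valued function on $S_\kappa\setminus\{x\}$ that has no continuous extension to $S_\kappa$.
   Context: A space is zero-dimensional if it has a base of clopen sets. For a zero-dimensional space $X$ and an open $U\subseteq X$, the ($X$-)type $\tau(U)$ is the least cardinal $\tau$ such that $U$ is a union of $\tau$ many clopen subsets of $X$. A zero-dimensional space is an $F_\kappa$-space if every open subset of type less than $\kappa$ is $C^*$-embedded (every bounded continuous real-valued function on it extends continuously to the whole space). A space is a $G_\kappa$-space if every non-empty intersection of fewer than $\kappa$ open sets has non-empty interior. A $\kappa$-Parovičenko space is a compact Hausdorff zero-dimensional $F_\kappa$- and $G_\kappa$-space without isolated points (no weight restriction is imposed). If $\kappa=\kappa^{<\kappa}$ there is, up to homeomorphism, a unique $\kappa$-Parovičenko space of weight $\kappa$; it is denoted $S_\kappa$. *)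

From Stdlib Require Import Reals List.
Open Scope R_scope.

Record TopSpace := {
  carrier :> Type;
  open : (carrier -> Prop) -> Prop;
  open_full : open (fun _ => True);
  open_inter : forall U V, open U -> open V -> open (fun x => U x /\ V x);
  open_union : forall F : (carrier -> Prop) -> Prop,
      (forall U, F U -> open U) -> open (fun x => exists U, F U /\ U x)
}.

Arguments open {t} _.

Definition closed {X : TopSpace} (A : X -> Prop) : Prop := open (fun x => ~ A x).
Definition clopen {X : TopSpace} (A : X -> Prop) : Prop := open A /\ closed A.

Definition card_le (A B : Type) : Prop := exists f : A -> B, forall a a', f a = f a' -> a = a'.
Definition card_lt (A B : Type) : Prop := card_le A B /\ ~ card_le B A.
Definition card_eq (A B : Type) : Prop := card_le A B /\ card_le B A.

Definition infinite_card (K : Type) : Prop := card_le nat K.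

(** kappa^{<kappa} = kappa, i.e. kappa^lambda <= kappa for all lambda < kappa *)
Definition kappa_lt_kappa_eq (K : Type) : Prop :=
  forall L : Type, card_lt L K -> card_le (L -> K) K.

Definition compact (X : TopSpace) : Prop :=
  forall F : (X -> Prop) -> Prop,
    (forall U, F U -> open U) ->
    (forall x : X, exists U, F U /\ U x) ->
    exists l : list (X -> Prop),
      (forall U, In U l -> F U) /\ (forall x : X, exists U, In U l /\ U x).

Definition hausdorff (X : TopSpace) : Prop :=
  forall x y : X, x <> y ->
    exists U V, open U /\ open V /\ U x /\ V y /\ (forall z, ~ (U z /\ V z)).

Definition zero_dimensional (X : TopSpace) : Prop :=
  forall (U : X -> Prop) (x : X), open U -> U x ->
    exists C, clopen C /\ C x /\ (forall y, C y -> U y).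

Definition is_base (X : TopSpace) (B : (X -> Prop) -> Prop) : Prop :=
  (forall U, B U -> open U) /\
  (forall (U : X -> Prop) (x : X), open U -> U x ->
     exists V, B V /\ V x /\ (forall y, V y -> U y)).

Definition weight_eq (X : TopSpace) (K : Type) : Prop :=
  (exists B, is_base X B /\ card_eq {U : X -> Prop | B U} K) /\
  (forall B, is_base X B -> card_le K {U : X -> Prop | B U}).

Definition no_isolated_points (X : TopSpace) : Prop :=
  forall x : X, ~ open (fun y => y = x).

Definition sub_continuous {X : TopSpace} (A : X -> Prop) (f : {x | A x} -> R) : Prop :=
  forall (a : {x | A x}) (eps : R), eps > 0 ->
    exists U : X -> Prop, open U /\ U (proj1_sig a) /\
      forall b : {x | A x}, U (proj1_sig b) -> Rabs (f b - f a) < eps.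

Definition continuous_fun {X : TopSpace} (g : X -> R) : Prop :=
  forall (a : X) (eps : R), eps > 0 ->
    exists U : X -> Prop, open U /\ U a /\ forall b, U b -> Rabs (g b - g a) < eps.

Definition bounded_fun {T : Type} (f : T -> R) : Prop :=
  exists M : R, forall t, Rabs (f t) <= M.

Definition C_star_embedded {X : TopSpace} (A : X -> Prop) : Prop :=
  forall f : {x | A x} -> R, bounded_fun f -> sub_continuous A f ->
    exists g : X -> R, continuous_fun g /\ forall a : {x | A x}, g (proj1_sig a) = f a.

Definition type_lt (X : TopSpace) (K : Type) (U : X -> Prop) : Prop :=
  exists (I : Type) (C : I -> X -> Prop), card_lt I K /\
    (forall i, clopen (C i)) /\
    (forall x, U x <-> exists i, C i x).

Definition F_kappa (X : TopSpace) (K : Type) : Prop :=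
  zero_dimensional X /\
  forall U : X -> Prop, open U -> type_lt X K U -> C_star_embedded U.

Definition G_kappa (X : TopSpace) (K : Type) : Prop :=
  forall (I : Type) (U : I -> X -> Prop), card_lt I K ->
    (forall i, open (U i)) ->
    (exists x, forall i, U i x) ->
    exists V : X -> Prop, open V /\ (exists x, V x) /\
      (forall y, V y -> forall i, U i y).

Definition kappa_Parovicenko (X : TopSpace) (K : Type) : Prop :=
  compact X /\ hausdorff X /\ zero_dimensional X /\
  F_kappa X K /\ G_kappa X K /\ no_isolated_points X.

(** Enumerate a base [(T_k)_{k ∈ κ}] of [X] along a well-order of κ whose
  initial segments all have size < κ, and choose by transfinite recursion clopen
  sets [I_k], [J_k] missing [x], with every [I_a] disjoint from every [J_b], such that
  - if [x ∈ T_k], both [I_k] and [J_k] meet [T_k]: the G_κ-property leaves an open set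
    inside [T_k] away from the fewer than κ earlier sets, and it contains two points
    since [X] has no isolated points;
  - if [T_k] lies in a clopen set missing [x], then [T_k ⊆ I_k ∪ J_k]: the F_κ-property
    separates the earlier [I]'s from the earlier [J]'s by a clopen set.
  Hence the [I_k], [J_k] cover [X \ {x}] and both accumulate at [x]: the function equal
  to 1 on [⋃ I_k] and 0 on [⋃ J_k] is bounded and continuous on [X \ {x}] but has
  no continuous extension.
*)

From Pilot Require Import Defs.
From Stdlib Require Import Reals List Lra.
From Stdlib Require Import Classical ClassicalEpsilon FunctionalExtensionality
  PropExtensionality ProofIrrelevance Wellfounded.
From mathcomp Require ssreflect ssrbool eqtype boolp wochoice.

Module WellOrder.
Import ssreflect ssrbool eqtype boolp wochoice.

Lemma strict_well_order_exists (K : Type) : exists lt : K -> K -> Prop,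
  well_founded lt /\ (forall a b, lt a b \/ a = b \/ lt b a).
Proof.
have [R wR] := @well_ordering_principle {classic K}.
have wc : wo_chain R predT by apply: withinW.
have total : forall a b : K, R a b \/ R b a.
  by move=> a b; apply/orP; exact: wo_chainW wc a b isT isT.
have antisym := wo_chain_antisymmetric wc.
exists (fun a b => R a b /\ a <> b); split.
- move=> a; apply: contrapT => not_acc.
  have [|m [[Hm m_min] _]] :=
    wR [pred y : {classic K} | `[< ~ Acc (fun a b => R a b /\ a <> b) y >]].
    by exists a; rewrite inE; apply/asboolP.
  move: Hm; rewrite inE => /asboolP; apply; constructor => y [Rym y_neq_m].
  apply: contrapT => not_acc_y; apply: y_neq_m; apply: antisym => //.
  by rewrite Rym /=; apply: m_min; rewrite inE; apply/asboolP.
- move=> a b; have [<-|a_neq_b] := pselect (a = b); first by right; left.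
  by case: (total a b) => [Rab|Rba]; [left|right; right; split=> // ?; apply: a_neq_b].
Qed.

End WellOrder.
Import WellOrder.

Lemma sig_eq {A : Type} (P : A -> Prop) (u v : {a : A | P a}) :
  proj1_sig u = proj1_sig v -> u = v.
Proof. destruct u, v; simpl; intros ->; f_equal; apply proof_irrelevance. Qed.

Lemma wf_min {A : Type} (lt : A -> A -> Prop) : well_founded lt ->
  forall (P : A -> Prop) a, P a -> exists m, P m /\ forall b, lt b m -> ~ P b.
Proof.
  intros wf P a Pa. apply NNPP; intro no_min.
  assert (H : forall c, ~ P c).
  { intro c; induction c as [c IH] using (well_founded_ind wf).
    intro Pc; apply no_min; exists c; split; auto. }
  exact (H a Pa).
Qed.

(** Take a well-order, the least [m] whose initial segment is at
    least as large as [K], and pull the order back along [K ↪ {b | b < m}]. *)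
Lemma initial_well_order (K : Type) : exists lt : K -> K -> Prop,
  well_founded lt /\ (forall a b, lt a b \/ a = b \/ lt b a) /\
  (forall a, card_lt {b | lt b a} K).
Proof.
  destruct (strict_well_order_exists K) as [lt0 [wf0 tri0]].
  assert (segment_le : forall P : K -> Prop, card_le {b : K | P b} K).
  { intros P; exists (@proj1_sig _ _); intros u v; apply sig_eq. }
  destruct (classic (exists a, card_le K {b | lt0 b a})) as [[a0 Ha0]|small].
  - destruct (wf_min lt0 wf0 (fun a => card_le K {b | lt0 b a}) a0 Ha0)
      as [m [[h h_inj] m_min]].
    exists (fun a b => lt0 (proj1_sig (h a)) (proj1_sig (h b))).
    split; [apply (wf_inverse_image _ _ lt0 (fun a => proj1_sig (h a)) wf0)|split].
    + intros a b. destruct (tri0 (proj1_sig (h a)) (proj1_sig (h b))) as [H|[H|H]]; auto.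
      right; left; apply h_inj, sig_eq, H.
    + intros a; split; [apply segment_le|intros [k k_inj]].
      apply (m_min (proj1_sig (h a)) (proj2_sig (h a))).
      exists (fun z => exist (fun c => lt0 c (proj1_sig (h a)))
                        (proj1_sig (h (proj1_sig (k z)))) (proj2_sig (k z))).
      intros z z' E. apply k_inj, sig_eq, h_inj, sig_eq.
      apply (f_equal (@proj1_sig _ _)) in E; exact E.
  - exists lt0; split; [exact wf0|split; [exact tri0|]].
    intros a; split; [apply segment_le|intros H; apply small; eauto].
Qed.

Open Scope R_scope.

Lemma open_ext {X : TopSpace} (U V : X -> Prop) :
  (forall z, U z <-> V z) -> open U -> open V.
Proof.
  intros H HU. assert (E : U = V).
  { apply functional_extensionality; intro z; apply propositional_extensionality, H. }
  rewrite <- E; exact HU.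
Qed.

Lemma open_local {X : TopSpace} (A : X -> Prop) :
  (forall z, A z -> exists U, open U /\ U z /\ forall w, U w -> A w) -> open A.
Proof.
  intros H.
  apply (open_ext (fun z => exists U, (open U /\ forall w, U w -> A w) /\ U z)).
  - intro z; split.
    + intros [U [[_ HU] Uz]]; auto.
    + intros Az; destruct (H z Az) as [U [? [? ?]]]; eauto.
  - apply open_union. intros U [? _]; auto.
Qed.

Lemma open_empty {X : TopSpace} : open (fun _ : X => False).
Proof. apply open_local; intros z []. Qed.

Lemma open_or {X : TopSpace} (U V : X -> Prop) :
  open U -> open V -> open (fun z => U z \/ V z).
Proof.
  intros HU HV; apply open_local; intros z [Hz|Hz]; [exists U|exists V]; auto.
Qed.

Lemma clopen_not {X : TopSpace} (U : X -> Prop) : clopen U -> clopen (fun z => ~ U z).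
Proof.
  intros [H1 H2]; split; [exact H2|].
  apply (open_ext U); [|exact H1].
  intro z; split; [tauto|apply NNPP].
Qed.

Lemma clopen_and {X : TopSpace} (U V : X -> Prop) :
  clopen U -> clopen V -> clopen (fun z => U z /\ V z).
Proof.
  intros [U1 U2] [V1 V2]; split; [apply open_inter; auto|].
  apply (open_ext (fun z => ~ U z \/ ~ V z)); [|apply open_or; auto].
  intro z; tauto.
Qed.

Lemma clopen_or {X : TopSpace} (U V : X -> Prop) :
  clopen U -> clopen V -> clopen (fun z => U z \/ V z).
Proof.
  intros [U1 U2] [V1 V2]; split; [apply open_or; auto|].
  apply (open_ext (fun z => ~ U z /\ ~ V z)); [|apply open_inter; auto].
  intro z; tauto.
Qed.

Lemma clopen_empty {X : TopSpace} : clopen (fun _ : X => False).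
Proof.
  split; [apply open_empty|].
  apply (open_ext (fun _ => True)); [|apply open_full]. intro; tauto.
Qed.

Lemma clopen_ext {X : TopSpace} (U V : X -> Prop) :
  (forall z, U z <-> V z) -> clopen U -> clopen V.
Proof.
  intros H [HU HU']; split; [exact (open_ext U V H HU)|].
  apply (open_ext (fun z => ~ U z)); [|exact HU']. intro z; rewrite H; tauto.
Qed.

Lemma clopen_list {X : TopSpace} (P : (X -> Prop) -> Prop) (l : list (X -> Prop)) :
  (forall U, P U -> clopen U) -> clopen (fun z => exists U, In U l /\ P U /\ U z).
Proof.
  intros HP; induction l as [|a l IH].
  - apply (clopen_ext (fun _ => False)); [|exact clopen_empty].
    intro z; split; [intros []|intros [U [[] _]]].
  - destruct (classic (P a)) as [Pa|nPa].
    + apply (clopen_ext (fun z => a z \/ exists U, In U l /\ P U /\ U z));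
        [|apply clopen_or; auto].
      intro z; split.
      * intros [Hz|[U [HU [PU Uz]]]]; [exists a; simpl; auto|exists U; simpl; auto].
      * intros [U [[<-|HU] [PU Uz]]]; [left; auto|right; eauto].
    + apply (clopen_ext (fun z => exists U, In U l /\ P U /\ U z)); [|exact IH].
      intro z; split.
      * intros [U [HU [PU Uz]]]; exists U; simpl; auto.
      * intros [U [[<-|HU] [PU Uz]]]; [contradiction|eauto].
Qed.

(** In a compact zero-dimensional space, between a closed set and an open
    superset there is a clopen set: cover the closed set by clopen subsets of the
    open one and extract a finite subcover. *)
Lemma clopen_between (X : TopSpace) : Defs.compact X -> zero_dimensional X ->
  forall F W : X -> Prop, closed F -> open W -> (forall z, F z -> W z) ->
  exists s, clopen s /\ (forall z, F z -> s z) /\ (forall z, s z -> W z).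
Proof.
  intros Hc Hz F W HF HW HFW.
  set (P := fun U : X -> Prop => clopen U /\ forall w, U w -> W w).
  destruct (Hc (fun U => P U \/ U = (fun z => ~ F z))) as [l [l_in l_cover]].
  - intros U [[[H _] _]| ->]; auto.
  - intro z. destruct (classic (F z)) as [Fz|nFz].
    + destruct (Hz W z HW (HFW z Fz)) as [C [HC [Cz CW]]].
      exists C; split; auto. left; split; auto.
    + exists (fun z => ~ F z); auto.
  - exists (fun z => exists U, In U l /\ P U /\ U z); split; [|split].
    + apply clopen_list. intros U [H _]; exact H.
    + intros z Fz. destruct (l_cover z) as [U [HU Uz]].
      destruct (l_in U HU) as [PU| ->]; [exists U; auto|contradiction].
    + intros z [U [_ [[_ H] Uz]]]; auto.
Qed.

Lemma open_lt {X : TopSpace} (g : X -> R) (c : R) :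
  continuous_fun g -> open (fun z => g z < c).
Proof.
  intros Hg; apply open_local; intros z Hz.
  destruct (Hg z (c - g z)) as [U [HU [Uz HUb]]]; [lra|].
  exists U; split; [|split]; auto. intros w Uw; specialize (HUb w Uw).
  apply Rabs_def2 in HUb; lra.
Qed.

Lemma open_gt {X : TopSpace} (g : X -> R) (c : R) :
  continuous_fun g -> open (fun z => c < g z).
Proof.
  intros Hg; apply open_local; intros z Hz.
  destruct (Hg z (g z - c)) as [U [HU [Uz HUb]]]; [lra|].
  exists U; split; [|split]; auto. intros w Uw; specialize (HUb w Uw).
  apply Rabs_def2 in HUb; lra.
Qed.

Lemma open_neq {X : TopSpace} : hausdorff X -> forall p : X, open (fun y => y <> p).
Proof.
  intros Hh p; apply open_local; intros z Hz.
  destruct (Hh z p Hz) as [U [V [HU [HV [Uz [Vp Hd]]]]]].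
  exists U; split; [|split]; auto. intros w Uw ->; apply (Hd p); auto.
Qed.

Lemma other_point {X : TopSpace} : no_isolated_points X ->
  forall (V : X -> Prop) w p, open V -> V w -> exists y, V y /\ y <> p.
Proof.
  intros Hni V w p HV Vw. apply NNPP; intro Hn.
  assert (only_p : forall y, V y -> y = p).
  { intros y Vy; apply NNPP; intro; apply Hn; eauto. }
  apply (Hni p). apply (open_ext V); [|exact HV].
  intro y; split; [apply only_p|intros ->; rewrite <- (only_p w Vw); exact Vw].
Qed.

Lemma two_clopen_pieces {X : TopSpace} (x : X) : no_isolated_points X -> hausdorff X ->
  zero_dimensional X -> forall V : X -> Prop, open V -> (exists w, V w) ->
  exists d1 d2 : X -> Prop, clopen d1 /\ clopen d2 /\
    (exists z, d1 z) /\ (exists z, d2 z) /\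
    (forall z, d1 z -> V z /\ z <> x) /\ (forall z, d2 z -> V z /\ z <> x) /\
    (forall z, d1 z -> d2 z -> False).
Proof.
  intros Hni Hh Hz V HV [w Vw].
  destruct (other_point Hni V w x HV Vw) as [y1 [Vy1 y1x]].
  set (V1 := fun z => V z /\ z <> x).
  assert (HV1 : open V1) by (apply open_inter; auto; apply open_neq; auto).
  destruct (other_point Hni V1 y1 y1 HV1 (conj Vy1 y1x)) as [y2 [[Vy2 y2x] y21]].
  destruct (Hh y2 y1 y21) as [U2 [U1 [HU2 [HU1 [U2y [U1y Hd]]]]]].
  destruct (Hz (fun z => V1 z /\ U1 z) y1) as [d1 [Hd1 [d1y d1s]]].
  { apply open_inter; auto. } { split; [split|]; auto. }
  destruct (Hz (fun z => V1 z /\ U2 z) y2) as [d2 [Hd2 [d2y d2s]]].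
  { apply open_inter; auto. } { split; [split|]; auto. }
  exists d1, d2; split; [|split; [|split; [|split; [|split; [|split]]]]]; eauto.
  - intros z Hz1; apply d1s; auto.
  - intros z Hz2; apply d2s; auto.
  - intros z Hz1 Hz2. apply (Hd z); split; [apply d2s|apply d1s]; auto.
Qed.

(** ** Indicator functions of separated clopen families *)

Definition union {X I : Type} (a : I -> X -> Prop) (z : X) : Prop := exists k, a k z.

Definition indicator {X I : Type} (a : I -> X -> Prop) (z : X) : R :=
  if excluded_middle_informative (union a z) then 1 else 0.

Lemma indicator_one {X I : Type} (a : I -> X -> Prop) k z : a k z -> indicator a z = 1.
Proof.
  intros Hz; unfold indicator.
  destruct excluded_middle_informative as [_|n]; [reflexivity|].
  exfalso; apply n; exists k; exact Hz.
Qed.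

Lemma indicator_zero {X I : Type} (a : I -> X -> Prop) z : ~ union a z -> indicator a z = 0.
Proof.
  intros Hz; unfold indicator.
  destruct excluded_middle_informative as [H|_]; [contradiction|reflexivity].
Qed.

Section Indicator.

Variables (X : TopSpace) (I : Type) (a b : I -> X -> Prop).
Hypotheses (clopen_a : forall k, clopen (a k)) (clopen_b : forall k, clopen (b k))
  (a_b_disjoint : forall k k' z, a k z -> b k' z -> False).

Lemma indicator_on_b k z : b k z -> indicator a z = 0.
Proof. intros Hz; apply indicator_zero; intros [k' Hk']; eapply a_b_disjoint; eauto. Qed.

Variable O : X -> Prop.
Hypothesis O_union : forall z, O z <-> exists k, a k z \/ b k z.

(** On a set [O] covered by the two families, the indicator of [a] is continuous,
    being locally constant on the open members of the families. *)
Lemma indicator_sub_continuous : sub_continuous O (fun p => indicator a (proj1_sig p)).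
Proof.
  intros [p Op] eps Heps; simpl. destruct (proj1 (O_union p) Op) as [k [Hk|Hk]].
  - exists (a k); split; [apply clopen_a|split; [exact Hk|]].
    intros [q Oq] Hq; simpl in *.
    rewrite (indicator_one a k q Hq), (indicator_one a k p Hk), Rminus_diag, Rabs_R0; lra.
  - exists (b k); split; [apply clopen_b|split; [exact Hk|]].
    intros [q Oq] Hq; simpl in *.
    rewrite (indicator_on_b k q Hq), (indicator_on_b k p Hk), Rminus_diag, Rabs_R0; lra.
Qed.

Lemma indicator_bounded : bounded_fun (fun p : {z | O z} => indicator a (proj1_sig p)).
Proof.
  exists 1; intro p; unfold indicator.
  destruct excluded_middle_informative; rewrite ?Rabs_R1, ?Rabs_R0; lra.
Qed.

Lemma separating_function : C_star_embedded O ->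
  exists g : X -> R, continuous_fun g /\
    (forall k z, a k z -> g z = 1) /\ (forall k z, b k z -> g z = 0).
Proof.
  intros HO.
  destruct (HO _ indicator_bounded indicator_sub_continuous) as [g [Hg g_ext]].
  exists g; split; [exact Hg|split].
  - intros k z Hz. assert (Oz : O z) by (apply O_union; exists k; auto).
    exact (eq_trans (g_ext (exist _ z Oz)) (indicator_one a k z Hz)).
  - intros k z Hz. assert (Oz : O z) by (apply O_union; exists k; auto).
    exact (eq_trans (g_ext (exist _ z Oz)) (indicator_on_b k z Hz)).
Qed.

End Indicator.

(** In a compact F_κ-space two families of fewer than κ clopen sets, each member of
    one disjoint from each member of the other, are separated by a clopen set: their
    union has type < κ, and a superlevel set of a continuous function separating
    them can be shrunk to a clopen set. *)
Lemma clopen_separation (K : Type) (X : TopSpace) : Defs.compact X -> F_kappa X K ->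
  forall (I : Type) (a b : I -> X -> Prop), card_lt I K ->
  (forall k, clopen (a k)) -> (forall k, clopen (b k)) ->
  (forall k k' z, a k z -> b k' z -> False) ->
  exists s, clopen s /\ (forall k z, a k z -> s z) /\ (forall k z, b k z -> s z -> False).
Proof.
  intros Hc [Hz HF] I a b HI Ha Hb Hab.
  set (O := fun z => exists k, a k z \/ b k z).
  assert (O_open : open O).
  { apply open_local; intros z [k [Hk|Hk]].
    - exists (a k); split; [apply Ha|split; auto]. intros w Hw; exists k; auto.
    - exists (b k); split; [apply Hb|split; auto]. intros w Hw; exists k; auto. }
  assert (O_type : type_lt X K O).
  { exists I, (fun k z => a k z \/ b k z); split; [exact HI|split; [|reflexivity]].
    intro k; apply clopen_or; auto. }
  destruct (separating_function X I a b Ha Hb Hab O (fun z => conj (fun H => H) (fun H => H))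
              (HF O O_open O_type)) as [g [Hg [g_a g_b]]].
  destruct (clopen_between X Hc Hz (fun z => 1 <= g z) (fun z => 1/2 < g z))
    as [s [Hs [s_above s_below]]].
  - apply (open_ext (fun z => g z < 1)); [|apply open_lt; auto]. intro z; split; lra.
  - apply open_gt; auto.
  - intros; lra.
  - exists s; split; [exact Hs|split].
    + intros k z Hk. apply s_above. rewrite (g_a k z Hk); lra.
    + intros k z Hk sz. specialize (s_below z sz). rewrite (g_b k z Hk) in s_below; lra.
Qed.

(** ** One step of the construction *)

Record stage {X : TopSpace} {Idx : Type} (x : X) (a b : Idx -> X -> Prop)
    (T I J : X -> Prop) : Prop := {
  stage_clopen_I : clopen I;
  stage_clopen_J : clopen J;
  stage_I_avoids : ~ I x;
  stage_J_avoids : ~ J x;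
  stage_disjoint : forall z, I z -> J z -> False;
  stage_I_earlier : forall k z, I z -> b k z -> False;
  stage_J_earlier : forall k z, J z -> a k z -> False;
  stage_split : T x -> (exists z, I z /\ T z) /\ (exists z, J z /\ T z);
  stage_cover : (exists c, clopen c /\ ~ c x /\ forall z, T z -> c z) ->
                forall z, T z -> I z \/ J z
}.

Section Step.

Variables (K : Type) (X : TopSpace) (x : X).
Hypotheses (X_compact : Defs.compact X) (X_hausdorff : hausdorff X)
  (X_zero_dim : zero_dimensional X) (X_F : F_kappa X K) (X_G : G_kappa X K)
  (X_perfect : no_isolated_points X).

Variables (Idx : Type) (a b : Idx -> X -> Prop).
Hypotheses (Idx_small : card_lt Idx K)
  (clopen_a : forall k, clopen (a k)) (clopen_b : forall k, clopen (b k))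
  (a_avoids : forall k, ~ a k x) (b_avoids : forall k, ~ b k x)
  (a_b_disjoint : forall k k' z, a k z -> b k' z -> False).

(** By the G_κ-property, every open neighbourhood of [x] contains a nonempty open
    set avoiding all earlier sets. *)
Lemma room_near_x (T : X -> Prop) : open T -> T x ->
  exists V, open V /\ (exists w, V w) /\
    forall z, V z -> T z /\ (forall k, ~ a k z) /\ (forall k, ~ b k z).
Proof.
  intros HT Tx. destruct (classic (exists k : Idx, True)) as [[k0 _]|no_index].
  - destruct (X_G Idx (fun k z => T z /\ ~ a k z /\ ~ b k z) Idx_small)
      as [V [HV [Vw V_sub]]].
    + intro k; apply open_inter; [exact HT|apply open_inter].
      * apply (clopen_not _ (clopen_a k)).
      * apply (clopen_not _ (clopen_b k)).
    + exists x; intro k; auto.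
    + exists V; split; [exact HV|split; [exact Vw|]].
      intros z Vz; split; [apply (V_sub z Vz k0)|split; intro k; apply (V_sub z Vz k)].
  - exists T; split; [exact HT|split; [exists x; exact Tx|]].
    intros z Tz; split; [exact Tz|split; intros k; exfalso; apply no_index; exists k; auto].
Qed.

(** Case [x ∈ T]: take two disjoint nonempty clopen pieces of such a room. *)
Lemma stage_through_x (T : X -> Prop) : open T -> T x -> exists I J, stage x a b T I J.
Proof.
  intros HT Tx. destruct (room_near_x T HT Tx) as [V [HV [Vw V_sub]]].
  destruct (two_clopen_pieces x X_perfect X_hausdorff X_zero_dim V HV Vw)
    as [d1 [d2 [H1 [H2 [[z1 Z1] [[z2 Z2] [S1 [S2 D]]]]]]]].
  exists d1, d2; split; auto.
  - intro H; exact (proj2 (S1 x H) eq_refl).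
  - intro H; exact (proj2 (S2 x H) eq_refl).
  - intros k z Hz Hb. exact (proj2 (proj2 (V_sub z (proj1 (S1 z Hz)))) k Hb).
  - intros k z Hz Ha. exact (proj1 (proj2 (V_sub z (proj1 (S2 z Hz)))) k Ha).
  - intros _; split.
    + exists z1; split; [exact Z1|apply (V_sub z1 (proj1 (S1 z1 Z1)))].
    + exists z2; split; [exact Z2|apply (V_sub z2 (proj1 (S2 z2 Z2)))].
  - intros [c [_ [cx cT]]]; exfalso; exact (cx (cT x Tx)).
Qed.

(** Case [T ⊆ c] with [c] clopen missing [x]: split [c] along a clopen set
    separating the earlier families (F_κ-property). *)
Lemma stage_away_from_x (T : X -> Prop) :
  (exists c, clopen c /\ ~ c x /\ forall z, T z -> c z) -> exists I J, stage x a b T I J.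
Proof.
  intros [c [Hc [cx cT]]].
  destruct (clopen_separation K X X_compact X_F Idx a b Idx_small clopen_a clopen_b
              a_b_disjoint) as [s [Hs [a_in_s b_out_s]]].
  exists (fun z => c z /\ s z), (fun z => c z /\ ~ s z); split.
  - apply clopen_and; auto.
  - apply clopen_and; [exact Hc|apply clopen_not; exact Hs].
  - tauto.
  - tauto.
  - tauto.
  - intros k z [_ sz] Hb; exact (b_out_s k z Hb sz).
  - intros k z [_ sz] Ha; exact (sz (a_in_s k z Ha)).
  - intros Tx; exfalso; exact (cx (cT x Tx)).
  - intros _ z Tz. destruct (classic (s z)); [left|right]; split; auto.
Qed.

(** Every open set [T] admits a next stage; if neither case applies, the empty
    sets will do. *)
Lemma stage_exists (T : X -> Prop) : open T -> exists I J, stage x a b T I J.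
Proof.
  intros HT. destruct (classic (T x)) as [Tx|nTx]; [exact (stage_through_x T HT Tx)|].
  destruct (classic (exists c, clopen c /\ ~ c x /\ forall z, T z -> c z))
    as [Hc|no_c]; [exact (stage_away_from_x T Hc)|].
  exists (fun _ => False), (fun _ => False); split; try tauto; apply clopen_empty.
Qed.

End Step.

(** ** Two clopen families oscillating at a point *)

Record oscillating_at {X : TopSpace} {Idx : Type} (x : X) (I J : Idx -> X -> Prop) :
    Prop := {
  osc_clopen_I : forall k, clopen (I k);
  osc_clopen_J : forall k, clopen (J k);
  osc_disjoint : forall k k' z, I k z -> J k' z -> False;
  osc_cover : forall z, z <> x <-> exists k, I k z \/ J k z;
  osc_dense_I : forall U, open U -> U x -> exists k z, I k z /\ U z;
  osc_dense_J : forall U, open U -> U x -> exists k z, J k z /\ U z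
}.

(** If such families exist, [X \ {x}] is not C*-embedded: a continuous extension of
    the indicator of [⋃ I] would take both values 0 and 1 arbitrarily close to [x]. *)
Lemma oscillating_not_C_star {X : TopSpace} {Idx : Type} (x : X) (I J : Idx -> X -> Prop) :
  oscillating_at x I J -> ~ C_star_embedded (fun y : X => y <> x).
Proof.
  intros [HI HJ HIJ Hcover HdI HdJ] HC.
  destruct (separating_function X Idx I J HI HJ HIJ _ Hcover HC) as [g [Hg [g_I g_J]]].
  destruct (Hg x (1/2)) as [U [HU [Ux U_close]]]; [lra|].
  destruct (HdI U HU Ux) as [k1 [z1 [Z1 U1]]].
  destruct (HdJ U HU Ux) as [k2 [z2 [Z2 U2]]].
  pose proof (U_close z1 U1) as B1; pose proof (U_close z2 U2) as B2.
  rewrite (g_I k1 z1 Z1) in B1; rewrite (g_J k2 z2 Z2) in B2.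
  apply Rabs_def2 in B1; apply Rabs_def2 in B2; lra.
Qed.

(** ** The transfinite construction *)

(** An enumeration of a base of [X] indexed by [K], for [X] of weight [K]: the
    [k]-th set is the basic set coded by [k], or empty if [k] codes none. *)
Lemma base_enumeration (X : TopSpace) (K : Type) : weight_eq X K ->
  exists basic : K -> X -> Prop, (forall k, open (basic k)) /\
    forall U z, open U -> U z -> exists k, basic k z /\ forall y, basic k y -> U y.
Proof.
  intros [[B [[B_open B_base] [[code code_inj] _]]] _].
  exists (fun k z => exists u, code u = k /\ proj1_sig u z); split.
  - intros k; apply open_local; intros z [u [Hu uz]].
    exists (proj1_sig u); split; [apply B_open, proj2_sig|split; [exact uz|]].
    intros w uw; exists u; auto.
  - intros U z HU Uz. destruct (B_base U z HU Uz) as [V [BV [Vz VU]]].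
    exists (code (exist _ V BV)); split; [exists (exist _ V BV); auto|].
    intros y [u [Hu uy]]. apply code_inj in Hu; subst u; exact (VU y uy).
Qed.

Section Recursion.

Variables (K : Type) (X : TopSpace) (x : X).
Hypotheses (X_compact : Defs.compact X) (X_hausdorff : hausdorff X)
  (X_zero_dim : zero_dimensional X) (X_F : F_kappa X K) (X_G : G_kappa X K)
  (X_perfect : no_isolated_points X).

Variables (lt : K -> K -> Prop) (basic : K -> X -> Prop).
Hypotheses (lt_wf : well_founded lt) (lt_trichotomy : forall a b, lt a b \/ a = b \/ lt b a)
  (lt_small : forall a, card_lt {b | lt b a} K)
  (basic_open : forall k, open (basic k))
  (basic_base : forall U z, open U -> U z ->
     exists k, basic k z /\ forall y, basic k y -> U y).

Definition pairs : Type := ((X -> Prop) * (X -> Prop))%type.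

Definition next_stage (a : K) (prev : forall b, lt b a -> pairs) : pairs :=
  epsilon (inhabits ((fun _ => False), (fun _ => False)))
    (fun ij => stage x (fun k : {b | lt b a} => fst (prev _ (proj2_sig k)))
                       (fun k : {b | lt b a} => snd (prev _ (proj2_sig k)))
                       (basic a) (fst ij) (snd ij)).

Definition stages : K -> pairs := Fix lt_wf (fun _ => pairs) next_stage.

Definition chosen_I (a : K) : X -> Prop := fst (stages a).
Definition chosen_J (a : K) : X -> Prop := snd (stages a).

Lemma stages_unfold (a : K) : stages a = next_stage a (fun b _ => stages b).
Proof.
  unfold stages. apply (Fix_eq lt_wf (fun _ => pairs) next_stage). intros c f g Hfg.
  replace f with g; [reflexivity|].
  apply functional_extensionality_dep; intro b;
    apply functional_extensionality_dep; intro h; symmetry; apply Hfg.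
Qed.

Definition valid (a : K) : Prop :=
  stage x (fun k : {b | lt b a} => chosen_I (proj1_sig k))
          (fun k : {b | lt b a} => chosen_J (proj1_sig k))
          (basic a) (chosen_I a) (chosen_J a).

Lemma valid_disjoint (a1 a2 : K) z :
  valid a1 -> valid a2 -> chosen_I a1 z -> chosen_J a2 z -> False.
Proof.
  intros V1 V2 H1 H2. destruct (lt_trichotomy a1 a2) as [l|[<-|l]].
  - exact (stage_J_earlier _ _ _ _ _ _ V2 (exist _ a1 l) z H2 H1).
  - exact (stage_disjoint _ _ _ _ _ _ V1 z H1 H2).
  - exact (stage_I_earlier _ _ _ _ _ _ V1 (exist _ a2 l) z H1 H2).
Qed.

Lemma all_valid (a : K) : valid a.
Proof.
  induction a as [a IH] using (well_founded_ind lt_wf).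
  unfold valid, chosen_I, chosen_J. rewrite (stages_unfold a). unfold next_stage.
  apply epsilon_spec.
  destruct (stage_exists K X x X_compact X_hausdorff X_zero_dim X_F X_G X_perfect
              {b | lt b a} (fun k => chosen_I (proj1_sig k)) (fun k => chosen_J (proj1_sig k))
              (lt_small a)
              (fun k => stage_clopen_I _ _ _ _ _ _ (IH _ (proj2_sig k)))
              (fun k => stage_clopen_J _ _ _ _ _ _ (IH _ (proj2_sig k)))
              (fun k => stage_I_avoids _ _ _ _ _ _ (IH _ (proj2_sig k)))
              (fun k => stage_J_avoids _ _ _ _ _ _ (IH _ (proj2_sig k)))
              (fun k k' z => valid_disjoint _ _ z (IH _ (proj2_sig k)) (IH _ (proj2_sig k')))
              (basic a) (basic_open a)) as [I [J HIJ]].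
  exists (I, J); exact HIJ.
Qed.

Lemma stages_oscillating : oscillating_at x chosen_I chosen_J.
Proof.
  split.
  - intro k; exact (stage_clopen_I _ _ _ _ _ _ (all_valid k)).
  - intro k; exact (stage_clopen_J _ _ _ _ _ _ (all_valid k)).
  - intros k k' z; apply valid_disjoint; apply all_valid.
  - intro y; split.
    + intro yx. destruct (X_hausdorff y x yx) as [U [V [HU [HV [Uy [Vx UV]]]]]].
      destruct (X_zero_dim U y HU Uy) as [c [Hc [cy cU]]].
      destruct (basic_base c y (proj1 Hc) cy) as [k [Bky Bkc]].
      exists k. apply (stage_cover _ _ _ _ _ _ (all_valid k)); [|exact Bky].
      exists c; split; [exact Hc|split; [|exact Bkc]].
      intro cx; exact (UV x (conj (cU x cx) Vx)).
    + intros [k [Hk|Hk]] ->.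
      * exact (stage_I_avoids _ _ _ _ _ _ (all_valid k) Hk).
      * exact (stage_J_avoids _ _ _ _ _ _ (all_valid k) Hk).
  - intros U HU Ux. destruct (basic_base U x HU Ux) as [k [Bkx BkU]].
    destruct (proj1 (stage_split _ _ _ _ _ _ (all_valid k) Bkx)) as [z [Iz Tz]].
    exists k, z; split; [exact Iz|exact (BkU z Tz)].
  - intros U HU Ux. destruct (basic_base U x HU Ux) as [k [Bkx BkU]].
    destruct (proj2 (stage_split _ _ _ _ _ _ (all_valid k) Bkx)) as [z [Jz Tz]].
    exists k, z; split; [exact Jz|exact (BkU z Tz)].
Qed.

End Recursion.

Theorem corollary4p2 :
  forall (K : Type), infinite_card K -> kappa_lt_kappa_eq K ->
  forall (X : TopSpace), kappa_Parovicenko X K -> weight_eq X K ->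
  forall x : X, ~ C_star_embedded (fun y : X => y <> x).
Proof.
  intros K _ _ X [Hc [Hh [Hz [HF [HG Hni]]]]] Hw x.
  destruct (base_enumeration X K Hw) as [basic [basic_open basic_base]].
  destruct (initial_well_order K) as [lt [lt_wf [lt_tri lt_small]]].
  exact (oscillating_not_C_star x _ _
           (stages_oscillating K X x Hc Hh Hz HF HG Hni lt basic lt_wf lt_tri lt_small
              basic_open basic_base)).
Qed.
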